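(* Let $d\ge 2$ and let ${\cal P}=\{\Pi_i,\frac{1}{d^2}\}_{i=1}^{d^2}$ be a SIC ensemble on $\mathbb{C}^d$, i.e. $\Pi_i=|\psi_i\rangle\langle\psi_i|$ for unit vectors $\psi_i$ with $|\langle\psi_i|\psi_j\rangle|^2=\frac{1}{d+1}$ for all $i\ne j$, each with probability $1/d^2$. Let ${\cal G}=\{G_b\}$ be any (finite) POVM on $\mathbb{C}^d$ consisting of rank-one elements $G_b=g_b|\phi_b\rangle\langle\phi_b|\equiv g_b\sigma_b$ ($g_b>0$, $\|\phi_b\|=1$), and let ${\cal M}$ be the reproduction strategy $b\mapsto\sigma_b$. Then $$F_{\cal P}({\cal G},{\cal M})=\frac{2}{d+1}=F_{\cal P},$$ i.e. this simple strategy achieves the accessible fidelity.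
   Context: For a POVM ${\cal E}=\{E_b\}$ and a state-reproduction strategy ${\cal M}:b\mapsto\sigma_b$ (density operators), the average fidelity is $F_{\cal P}({\cal E},{\cal M})=\sum_{b,i}\pi_i\,{\rm tr}(\Pi_iE_b)\,{\rm tr}(\Pi_i\sigma_b)$ (here $\pi_i=1/d^2$). The accessible fidelity is $F_{\cal P}=\sup_{{\cal E},{\cal M}}F_{\cal P}({\cal E},{\cal M})$ over all POVMs and reproduction strategies. *)

From HB Require Import structures.
From mathcomp Require Import all_boot all_order all_algebra.
From mathcomp Require Import complex.
From mathcomp Require Import classical_sets boolp reals.
Set Implicit Arguments. Unset Strict Implicit. Unset Printing Implicit Defensive.
Import Order.TTheory GRing.Theory Num.Theory.
Local Open Scope ring_scope.
Local Open Scope classical_set_scope.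

Definition adj (R : rcfType) m n (A : 'M[R[i]]_(m, n)) : 'M[R[i]]_(n, m) :=
  (map_mx conjc A)^T.

Definition braket (R : rcfType) d (u v : 'cV[R[i]]_d) : R[i] := (adj u *m v) 0 0.

Definition ketbra (R : rcfType) d (psi : 'cV[R[i]]_d) : 'M[R[i]]_d := psi *m adj psi.

Definition psd (R : rcfType) d (A : 'M[R[i]]_d) : Prop :=
  adj A = A /\ forall v : 'cV[R[i]]_d, 0 <= (adj v *m A *m v) 0 0.

Definition density (R : rcfType) d (A : 'M[R[i]]_d) : Prop :=
  psd A /\ \tr A = 1.

Definition povm (R : rcfType) d (B : finType) (E : B -> 'M[R[i]]_d) : Prop :=
  (forall b, psd (E b)) /\ \sum_(b : B) E b = 1%:M.

Definition strategy (R : rcfType) d (B : finType) (M : B -> 'M[R[i]]_d) : Prop :=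
  forall b, density (M b).

Definition avg_fidelity (R : rcfType) d (I : finType) (pi : I -> R)
  (Pi : I -> 'M[R[i]]_d) (B : finType) (E M : B -> 'M[R[i]]_d) : R :=
  @complex.Re R (\sum_(b : B) \sum_(i : I)
        real_complex R (pi i) * \tr (Pi i *m E b) * \tr (Pi i *m M b)).

Definition accessible_fidelity (R : realType) d (I : finType) (pi : I -> R)
  (Pi : I -> 'M[R[i]]_d) : R :=
  sup [set r : R | exists (B : finType) (E M : B -> 'M[R[i]]_d),
         povm E /\ strategy M /\ r = avg_fidelity pi Pi E M].

Definition SIC (R : rcfType) d (psi : 'I_(d ^ 2) -> 'cV[R[i]]_d) : Prop :=
  (forall i, braket (psi i) (psi i) = 1) /\
  (forall i j, i != j -> `|braket (psi i) (psi j)| ^+ 2 = (d.+1%:R)^-1).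

From HB Require Import structures.
From mathcomp Require Import all_boot all_order all_algebra.
From mathcomp Require Import complex.
From mathcomp Require Import classical_sets boolp reals.
From mathcomp Require Import ring.
Import Order.TTheory GRing.Theory Num.Theory.
Local Open Scope ring_scope.

(* The SIC projectors Pi_i form a basis of the d x d matrices, since their Gram
   matrix tr (Pi_i Pi_j) = (d [i = j] + 1) / (d + 1) is invertible.  Expanding
   in this basis gives the frame identity
     sum_i tr (Pi_i X) tr (Pi_i Y) = d / (d + 1) (tr (X Y) + tr X tr Y),
   so any POVM E and strategy sigma have average fidelity
   (Re sum_b tr (E_b sigma_b) + d) / (d (d + 1)).  For positive semidefinite A
   and B the 2 x 2 principal minors give |A_jk B_kj| <= (A_jj B_kk + A_kk B_jj) / 2,
   hence Re tr (A B) <= tr A tr B and sum_b tr (E_b sigma_b) <= sum_b tr E_b = d.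
   The rank-one strategy attains this bound: tr (G_b sigma_b) = g_b = tr G_b. *)

Section BraKet.
Variable R : rcfType.
Local Notation C := R[i].

Lemma adjE m n (A : 'M[C]_(m, n)) i j : adj A i j = (A j i)^*.
Proof. by rewrite !mxE. Qed.

Lemma adjM m n p (A : 'M[C]_(m, n)) (B : 'M[C]_(n, p)) :
  adj (A *m B) = adj B *m adj A.
Proof. by rewrite /adj map_mxM trmx_mul. Qed.

Lemma adjK m n (A : 'M[C]_(m, n)) : adj (adj A) = A.
Proof. by apply/matrixP => i j; rewrite !adjE conjCK. Qed.

Lemma adjD m n (A B : 'M[C]_(m, n)) : adj (A + B) = adj A + adj B.
Proof. by apply/matrixP => i j; rewrite !mxE rmorphD. Qed.

Lemma adjZ m n x (A : 'M[C]_(m, n)) : adj (x *: A) = x^* *: adj A.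
Proof. by apply/matrixP => i j; rewrite !mxE rmorphM. Qed.

Lemma adj_delta n j : adj (delta_mx j 0 : 'cV[C]_n) = delta_mx 0 j.
Proof. by apply/matrixP => i k; rewrite !mxE conjc_nat andbC. Qed.

Lemma braketC d (u v : 'cV[C]_d) : braket v u = (braket u v)^*.
Proof.
rewrite /braket !mxE rmorph_sum; apply: eq_bigr => k _.
by rewrite !mxE rmorphM /= conjCK mulrC.
Qed.

Lemma mxtrace_ketbra d (u : 'cV[C]_d) : \tr (ketbra u) = braket u u.
Proof. by rewrite mxtrace_mulC /mxtrace big_ord1. Qed.

Lemma mxtrace_ketbraM d (u v : 'cV[C]_d) :
  \tr (ketbra u *m ketbra v) = `|braket u v| ^+ 2.
Proof.
rewrite normCK -braketC /ketbra mulmxA mxtrace_mulC !mulmxA /mxtrace big_ord1.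
by rewrite -mulmxA [LHS]mxE big_ord1 mulrC.
Qed.

Lemma ketbra_density d (u : 'cV[C]_d) : braket u u = 1 -> density (ketbra u).
Proof.
move=> u1; split; last by rewrite mxtrace_ketbra.
split=> [|v]; first by rewrite /ketbra adjM adjK.
rewrite /ketbra !mulmxA -mulmxA mxE big_ord1 -[(adj v *m u) 0 0]/(braket v u).
by rewrite braketC mulrC mul_conjC_ge0.
Qed.

End BraKet.

Section SICFrame.
Variables (R : rcfType) (d : nat) (psi : 'I_(d ^ 2) -> 'cV[R[i]]_d).
Hypothesis sic_psi : SIC psi.
Local Notation C := R[i].
Local Notation Pi i := (ketbra (psi i)).

Lemma mxtrace_sic i : \tr (Pi i) = 1.
Proof. by rewrite mxtrace_ketbra sic_psi.1. Qed.

Lemma mxtrace_sicM i j :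
  \tr (Pi i *m Pi j) = if i == j then 1 else d.+1%:R^-1.
Proof.
rewrite mxtrace_ketbraM; case: eqVneq => [->|/sic_psi.2 //].
by rewrite sic_psi.1 normr1 expr1n.
Qed.

Lemma mxtrace_sicM_comb (c : 'I_(d ^ 2) -> C) i :
  d.+1%:R * \tr (Pi i *m \sum_j c j *: Pi j) = d%:R * c i + \sum_j c j.
Proof.
rewrite mulmx_sumr raddf_sum (bigD1 i) //= [X in _ = _ + X](bigD1 i) //=.
rewrite -scalemxAr mxtraceZ mxtrace_sicM eqxx mulr1.
under eq_bigr => j ji do rewrite -scalemxAr mxtraceZ mxtrace_sicM eq_sym (negPf ji).
rewrite -mulr_suml mulrDr mulrCA mulfV ?pnatr_eq0 // mulr1 -natr1.
by rewrite mulrDl mul1r addrA.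
Qed.

Lemma mxtrace_sic_comb (c : 'I_(d ^ 2) -> C) :
  \tr (\sum_j c j *: Pi j) = \sum_j c j.
Proof.
by rewrite linear_sum; apply: eq_bigr => j _ /=; rewrite mxtraceZ mxtrace_sic mulr1.
Qed.

Hypothesis d_gt0 : (0 < d)%N.

Lemma sic_free : free [tuple Pi i | i < d ^ 2].
Proof.
apply/freeP => c; under eq_bigr do rewrite nth_mktuple.
move=> c0; have eq_c i : d%:R * c i + \sum_j c j = 0.
  by rewrite -mxtrace_sicM_comb c0 mulmx0 linear0 mulr0.
have d_neq0 := gtn_eqF d_gt0.
have sum_c : \sum_j c j = 0.
  have : \sum_(i < d ^ 2) (d%:R * c i + \sum_j c j) = 0 by apply: big1 => i _.
  rewrite big_split /= -mulr_sumr sumr_const card_ord -[_ *+ d ^ 2]mulr_natl -mulrDl.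
  by move/eqP; rewrite mulf_eq0 -natrD pnatr_eq0 addn_eq0 d_neq0 => /eqP.
move=> i; move/eqP: (eq_c i); rewrite sum_c addr0 mulf_eq0 pnatr_eq0 d_neq0.
exact/eqP.
Qed.

Lemma sic_span (X : 'M[C]_d) : exists c : 'I_(d ^ 2) -> C, X = \sum_j c j *: Pi j.
Proof.
have basis_sic : basis_of fullv [tuple Pi i | i < d ^ 2].
  rewrite basisEfree sic_free subvf dimvf dim_matrix size_tuple; exact: leqnn.
exists (coord [tuple Pi i | i < d ^ 2] ^~ X).
rewrite {1}(coord_span (_ : X \in span [tuple Pi i | i < d ^ 2])).
  by apply: eq_bigr => j _; rewrite nth_mktuple.
by rewrite (span_basis basis_sic) memvf.
Qed.

Lemma sum_mxtrace_sicM (X : 'M[C]_d) : \sum_i \tr (Pi i *m X) = d%:R * \tr X.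
Proof.
have [c ->] := sic_span X; apply: (@mulfI _ d.+1%:R); first by rewrite pnatr_eq0.
rewrite mulr_sumr; under eq_bigr do rewrite mxtrace_sicM_comb.
rewrite big_split /= -mulr_sumr sumr_const card_ord mxtrace_sic_comb.
rewrite -[_ *+ d ^ 2]mulr_natl -mulrDl mulrCA mulrA.
by rewrite -natrM mulnSr mulnn addnC natrD.
Qed.

Lemma sic_frame (X Y : 'M[C]_d) :
  \sum_i \tr (Pi i *m X) * \tr (Pi i *m Y) =
  d%:R / d.+1%:R * (\tr (X *m Y) + \tr X * \tr Y).
Proof.
apply: (@mulfI _ d.+1%:R); first by rewrite pnatr_eq0.
rewrite mulrA mulrCA mulfV ?pnatr_eq0 // mulr1.
have [c defY] := sic_span Y.
have trXY : \sum_i c i * \tr (Pi i *m X) = \tr (X *m Y).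
  rewrite mxtrace_mulC defY mulmx_suml linear_sum; apply: eq_bigr => i _ /=.
  by rewrite -scalemxAl mxtraceZ.
have trPiY i : d.+1%:R * \tr (Pi i *m Y) = d%:R * c i + \tr Y.
  by rewrite defY mxtrace_sicM_comb mxtrace_sic_comb.
rewrite mulr_sumr; under eq_bigr do rewrite mulrCA trPiY mulrDr.
rewrite big_split /= -mulr_suml sum_mxtrace_sicM.
under eq_bigr do rewrite mulrCA [_ * c _]mulrC.
by rewrite -mulr_sumr trXY mulrDr mulrA.
Qed.

End SICFrame.

Lemma normM_le_mean (F : numDomainType) (u v a1 a2 b1 b2 : F) :
    0 <= a1 -> 0 <= a2 -> 0 <= b1 -> 0 <= b2 ->
    `|u| ^+ 2 <= a1 * a2 -> `|v| ^+ 2 <= b1 * b2 ->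
  `|u * v| *+ 2 <= a1 * b1 + a2 * b2.
Proof.
move=> a1_ge0 a2_ge0 b1_ge0 b2_ge0 u_le v_le.
rewrite -ler_sqr ?nnegrE ?addr_ge0 ?mulr_ge0 ?mulrn_wge0 //.
apply: le_trans (real_leif_AGM2_scaled _ _).1; rewrite ?ger0_real ?mulr_ge0 //.
rewrite exprMn_n normrM exprMn ler_wMn2r // [_ * (a2 * b2)]mulrACA.
by apply: ler_pM; rewrite ?exprn_ge0.
Qed.

Section PSD.
Variables (R : rcfType) (n : nat).
Local Notation C := R[i].
Implicit Types (A B : 'M[C]_n) (x y : C).

Lemma delta_formE A j k :
  (delta_mx 0 j : 'rV[C]_n) *m A *m (delta_mx k 0 : 'cV[C]_n) = (A j k)%:M.
Proof. by apply/matrixP => i i'; rewrite !ord1 -rowE -(colE k) !mxE. Qed.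

Lemma psd_form2 A j k x y : psd A ->
  0 <= x * x^* * A j j + x * y^* * A k j + x^* * y * A j k + y^* * y * A k k.
Proof.
case=> _ /(_ (x *: delta_mx j 0 + y *: delta_mx k 0)).
rewrite adjD !adjZ !adj_delta !(mulmxDl, mulmxDr) -!(scalemxAl, scalemxAr).
by rewrite !delta_formE !mxE eqxx !mulr1n !mulrA !addrA.
Qed.

Lemma psd_diag_ge0 A j : psd A -> 0 <= A j j.
Proof.
move/(psd_form2 A j j 1 0); rewrite rmorph1 rmorph0.
by rewrite !(mulr0, mul0r, mul1r, addr0).
Qed.

Lemma psd_entryC A j k : psd A -> A k j = (A j k)^*.
Proof. by case=> adjA _; rewrite -[in LHS]adjA adjE. Qed.

Lemma psd_minor A j k : psd A -> `|A j k| ^+ 2 <= A j j * A k k.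
Proof.
move=> psdA; have form x y := psd_form2 A j k x y psdA.
rewrite (psd_entryC A j k psdA) normCK in form *.
have := psd_diag_ge0 A j psdA; have := psd_diag_ge0 A k psdA.
move: (A j j) (A k k) (A j k) form => a b c form b_ge0 a_ge0.
have [conj_a conj_b] := (conj_Creal (ger0_real a_ge0), conj_Creal (ger0_real b_ge0)).
have [a0|a_neq0] := eqVneq a 0.
  have := form (b + 1) (- c^*).
  rewrite [X in 0 <= X -> _](_ : _ = (b + 2%:R) * - (c * c^*)); last first.
    by rewrite a0 rmorphD rmorphN /= conjCK conj_b conjC1; ring.
  by rewrite pmulr_rge0 ?oppr_ge0 ?a0 ?mul0r // ltr_wpDl.
have := form (- c) a.
rewrite [X in 0 <= X -> _](_ : _ = a * (a * b - c * c^*)); last first.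
  by rewrite rmorphN conj_a; ring.
by rewrite pmulr_rge0 ?subr_ge0 // lt_def a_neq0.
Qed.

Lemma ler_Re (z w : C) : z <= w -> complex.Re z <= complex.Re w.
Proof. by rewrite lecE => /andP[]. Qed.

Lemma Re_le_norm (z : C) : complex.Re z <= complex.Re `|z|.
Proof. by apply: le_trans (ler_norm _) _; apply: ler_Re (normc_ge_Re z). Qed.

Lemma psd_Re_mxtraceM A B : psd A -> psd B ->
  complex.Re (\tr (A *m B)) <= complex.Re (\tr A * \tr B).
Proof.
move=> psdA psdB; rewrite -(ler_pMn2r (_ : 0 < 2)%N) // -[_ (_ * _) *+ 2]raddfMn /=.
have -> : \tr (A *m B) = \sum_j \sum_k A j k * B k j.
  by apply: eq_bigr => j _; rewrite mxE.
have -> : \tr A * \tr B *+ 2 = \sum_j \sum_k (A j j * B k k + A k k * B j j).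
  under eq_bigr do rewrite big_split /=.
  by rewrite big_split /= [X in _ + X]exchange_big /= -big_distrlr mulr2n.
rewrite !raddf_sum -sumrMnl; apply: ler_sum => j _.
rewrite !raddf_sum -sumrMnl; apply: ler_sum => k _ /=.
apply: le_trans (ler_wMn2r 2 (Re_le_norm _)) _.
rewrite -raddfMn; apply: ler_Re; apply: normM_le_mean;
  by rewrite ?psd_diag_ge0 ?psd_minor.
Qed.

End PSD.

Lemma Re_realM (R : rcfType) (x : R) (z : R[i]) :
  complex.Re ((x%:C)%C * z) = x * complex.Re z.
Proof. by case: z => a b; rewrite /= mul0r subr0. Qed.

Lemma sup_max (R : realType) (E : set R) x : E x -> ubound E x -> sup E = x.
Proof.
move=> Ex ubx; apply/eqP; rewrite eq_le ge_sup //; last by exists x.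
exact: (ub_le_sup (ex_intro _ x ubx)).
Qed.

Section SICFidelity.
Variables (R : rcfType) (d : nat) (psi : 'I_(d ^ 2) -> 'cV[R[i]]_d).
Hypotheses (sic_psi : SIC psi) (d_gt0 : (0 < d)%N).
Local Notation fidelity :=
  (avg_fidelity (fun _ => (d ^ 2)%:R^-1) (fun i => ketbra (psi i))).

Lemma avg_fidelity_sicE (B : finType) (E M : B -> 'M[R[i]]_d) :
    \sum_b E b = 1%:M -> (forall b, \tr (M b) = 1) ->
  fidelity E M = (complex.Re (\sum_b \tr (E b *m M b)) + d%:R) / (d%:R * d.+1%:R).
Proof.
move=> sumE trM.
have fidelity_b b : \sum_i ((d ^ 2)%:R^-1)%:C%C *
      \tr (ketbra (psi i) *m E b) * \tr (ketbra (psi i) *m M b) =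
    ((d%:R * d.+1%:R)^-1)%:C%C * (\tr (E b *m M b) + \tr (E b)).
  under eq_bigr do rewrite -mulrA.
  rewrite -mulr_sumr sic_frame // trM mulr1 mulrA; congr (_ * _).
  rewrite -!(rmorph_nat (real_complex R)) -!(fmorphV (real_complex R)).
  rewrite -!(rmorphM (real_complex R)); congr (_%:C)%C; field.
  by rewrite addrC natr1 !pnatr_eq0 (gtn_eqF d_gt0).
rewrite /avg_fidelity (eq_bigr _ (fun b _ => fidelity_b b)) -mulr_sumr Re_realM.
rewrite big_split raddfD /= -[\sum_i \tr (E i)]linear_sum sumE /=.
by rewrite mxtrace1 raddfMn mulrC.
Qed.

Let double_div_dS : (d%:R + d%:R) / (d%:R * d.+1%:R) = 2 / d.+1%:R :> R.
Proof. by field; rewrite addrC natr1 !pnatr_eq0 (gtn_eqF d_gt0). Qed.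

Lemma avg_fidelity_sic_le (B : finType) (E M : B -> 'M[R[i]]_d) :
  povm E -> strategy M -> fidelity E M <= 2 / d.+1%:R.
Proof.
move=> [psdE sumE] densM.
rewrite avg_fidelity_sicE // => [|b]; last exact: (densM b).2.
rewrite -double_div_dS ler_wpM2r ?invr_ge0 ?mulr_ge0 // lerD2r raddf_sum.
apply: le_trans (_ : \sum_b complex.Re (\tr (E b) * \tr (M b)) <= _).
  by apply: ler_sum => b _; apply: psd_Re_mxtraceM; [exact: psdE | exact: (densM b).1].
under eq_bigr do rewrite (densM _).2 mulr1.
by rewrite -raddf_sum -[\sum_i \tr (E i)]linear_sum sumE /= mxtrace1 raddfMn.
Qed.

Lemma avg_fidelity_rank1 (B : finType) (g : B -> R) (phi : B -> 'cV[R[i]]_d) :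
    (forall b, braket (phi b) (phi b) = 1) ->
    \sum_b (g b)%:C%C *: ketbra (phi b) = 1%:M ->
  fidelity (fun b => (g b)%:C%C *: ketbra (phi b)) (fun b => ketbra (phi b)) =
  2 / d.+1%:R.
Proof.
move=> phi1 sumG; rewrite avg_fidelity_sicE // => [|b]; last first.
  by rewrite mxtrace_ketbra phi1.
have -> : \sum_b \tr ((g b)%:C%C *: ketbra (phi b) *m ketbra (phi b)) =
    \tr (1%:M : 'M[R[i]]_d).
  rewrite -sumG linear_sum; apply: eq_bigr => b _ /=.
  by rewrite -scalemxAl !mxtraceZ mxtrace_ketbraM mxtrace_ketbra phi1 normr1 expr1n.
by rewrite mxtrace1 raddfMn.
Qed.

End SICFidelity.

Theorem theorem4 (R : realType) (d : nat) (hd : (2 <= d)%N)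
  (psi : 'I_(d ^ 2) -> 'cV[R[i]]_d) (hsic : SIC psi)
  (B : finType) (g : B -> R) (phi : B -> 'cV[R[i]]_d)
  (hg : forall b, 0 < g b)
  (hphi : forall b, braket (phi b) (phi b) = 1)
  (hG : povm (fun b => real_complex R (g b) *: ketbra (phi b))) :
  let pi := fun _ : 'I_(d ^ 2) => (d ^ 2)%:R^-1 : R in
  let Pi := fun i => ketbra (psi i) in
  avg_fidelity pi Pi (fun b => real_complex R (g b) *: ketbra (phi b))
    (fun b => ketbra (phi b)) = 2 / d.+1%:R /\
  accessible_fidelity pi Pi = 2 / d.+1%:R.
Proof.
move=> pi Pi; have d_gt0 : (0 < d)%N by apply: leq_trans hd.
have F_rank1 : avg_fidelity pi Pi (fun b => real_complex R (g b) *: ketbra (phi b))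
    (fun b => ketbra (phi b)) = 2 / d.+1%:R.
  by apply: avg_fidelity_rank1 => //; case: hG.
split=> //; apply: sup_max.
  exists B, (fun b => real_complex R (g b) *: ketbra (phi b)), (fun b => ketbra (phi b)).
  by split; [|split=> [b|]]; [exact: hG | exact: ketbra_density | rewrite F_rank1].
by move=> _ [B' [E [M [povmE [densM ->]]]]]; apply: avg_fidelity_sic_le.
Qed.
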